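(* Let $k$ be a positive integer and $p\geq 3$ a prime such that $p^{2}(p-1)\mid k$, and let $r\in\{1,\ldots,p-2\}$. Then there are infinitely many positive integers $n$ such that $$\nu_{p}\big(A_{p,k-r}(n)\big)\geq \nu_{p}(k).$$
   Context: For an integer $m\geq 2$ and a positive integer $k$, the integers $A_{m,k}(n)$, $n\in\mathbb{N}=\{0,1,2,\ldots\}$, are defined by the formal power series identity $\prod_{i=0}^{\infty}\big(1-x^{m^{i}}\big)^{-k}=\sum_{n=0}^{\infty}A_{m,k}(n)x^{n}$. For a prime $p$, $\nu_p(n)$ denotes the $p$-adic valuation of the integer $n$, with $\nu_p(0)=+\infty$. *)

From mathcomp Require Import all_boot all_order all_algebra.
Set Implicit Arguments. Unset Strict Implicit. Unset Printing Implicit Defensive.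
Import GRing.Theory.
Local Open Scope ring_scope.

(* Truncation of the geometric series 1/(1 - x^d) = \sum_j x^(j d) to the
   monomials of exponent j*d with j <= N. *)
Definition geom_trunc (d N : nat) : {poly nat} :=
  \sum_(j < N.+1) 'X^(j * d).

(* A_{m,k}(n) = [x^n] \prod_{i>=0} (1 - x^{m^i})^{-k}.
   Only factors with m^i <= n (so i <= n, as m >= 2) and, within each factor,
   only terms of degree <= n contribute to the coefficient of x^n; hence the
   coefficient of x^n of the following finite product is exactly A_{m,k}(n)
   (for m >= 2). *)
Definition A (m k n : nat) : nat :=
  let P : {poly nat} := (\prod_(i < n.+1) (geom_trunc (m ^ i)%N n ^+ k))%R in nth 0%N (polyseq P) n.

Definition nu_ge (p a e : nat) : Prop := a = 0%N \/ (e <= logn p a)%N.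

From mathcomp Require Import all_boot all_order all_algebra.
From mathcomp Require Import zify ring.
Set Implicit Arguments. Unset Strict Implicit. Unset Printing Implicit Defensive.
Import GRing.Theory.
Local Open Scope ring_scope.

(* Let F = prod_i (1 - x^(p^i))^-1 be the generating function of A_{p,1} and
   work with power series modulo x^(n+1).  Since
   prod_i (1 - x^(p^i))^p = prod_i (1 - x^(p^(i+1))) mod p, we get
   F^(p-1) = 1 - x mod p, and lifting p-th powers gives
   F^k = (1 - x)^(k/(p-1)) mod p^(nu_p k) whenever (p-1) | k.  Hence
   F^(k-r) = (1 - x)^(k/(p-1)) * prod_i (1 - x^(p^i))^r mod p^(nu_p k).
   For r + 2 <= p and P = p^L, base-p digits show that prod_i (1 - x^(p^i))^r
   has no monomial of degree in [(r+1)P, (r+2)P); so when k/(p-1) < P the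
   coefficient of x^((r+2)P - 1) on the right vanishes. *)

Definition congX (q : int) (n : nat) (a b : {poly int}) :=
  forall i, (i <= n)%N -> (q %| (a - b)`_i)%Z.

Lemma congX_dvd q q' n a b : (q %| q')%Z -> congX q' n a b -> congX q n a b.
Proof. by move=> qq' h i hi; apply: dvdz_trans qq' (h i hi). Qed.

Lemma congX0_mul q1 q2 n a b :
  congX q1 n a 0 -> congX q2 n b 0 -> congX (q1 * q2) n (a * b) 0.
Proof.
move=> ha hb i hi; rewrite subr0 coefM.
apply: (big_ind (fun x => _ %| x)%Z) => [||j _]; rewrite ?dvdz0 //.
  by move=> x y; apply: rpredD.
have hj : (j <= n)%N by apply: leq_trans hi; rewrite -ltnS.
have hij : (i - j <= n)%N by apply: leq_trans hi; rewrite leq_subr.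
by move: (ha _ hj) (hb _ hij); rewrite !subr0; apply: dvdz_mul.
Qed.

Lemma congX_muln0 m n x : congX m%:Z n (x *+ m) 0.
Proof. by move=> i _; rewrite subr0 coefMn -mulr_natr natz dvdz_mull. Qed.

Section TruncatedCongruence.
Variables (q : int) (n : nat).
Implicit Types a b c d : {poly int}.

Lemma congX_refl a : congX q n a a.
Proof. by move=> i _; rewrite subrr coef0 dvdz0. Qed.

Lemma congX_sym a b : congX q n a b -> congX q n b a.
Proof. by move=> h i hi; rewrite -opprB coefN rpredN h. Qed.

Lemma congX_trans a b c : congX q n a b -> congX q n b c -> congX q n a c.
Proof.
move=> hab hbc i hi; rewrite -[a](subrK b) -addrA coefD.
by rewrite rpredD ?hab ?hbc.
Qed.

Lemma congX_sub0 a b : congX q n a b <-> congX q n (a - b) 0.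
Proof. by split=> h i hi; move: (h i hi); rewrite subr0. Qed.

Lemma congX_add a b c d :
  congX q n a b -> congX q n c d -> congX q n (a + c) (b + d).
Proof.
move=> hab hcd i hi; rewrite opprD addrACA coefD.
by rewrite rpredD ?hab ?hcd.
Qed.

Lemma congX_mulr a b c : congX q n a b -> congX q n (a * c) (b * c).
Proof.
move/congX_sub0=> hab; apply/congX_sub0; rewrite -mulrBl -[q]mulr1.
by apply: congX0_mul hab _ => i _; rewrite dvd1z.
Qed.

Lemma congX_mul a b c d :
  congX q n a b -> congX q n c d -> congX q n (a * c) (b * d).
Proof.
move=> hab hcd; apply: congX_trans (congX_mulr c hab) _.
by rewrite ![b * _]mulrC; apply: congX_mulr.
Qed.

Lemma congX_exp a b m : congX q n a b -> congX q n (a ^+ m) (b ^+ m).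
Proof.
move=> hab; elim: m => [|m ih]; first exact: congX_refl.
by rewrite !exprS; apply: congX_mul.
Qed.

Lemma congX_sum I (s : seq I) (P : pred I) (F G : I -> {poly int}) :
  (forall i, P i -> congX q n (F i) (G i)) ->
  congX q n (\sum_(i <- s | P i) F i) (\sum_(i <- s | P i) G i).
Proof.
by move=> h; apply: (big_ind2 (congX q n)) => //; [apply: congX_refl | apply: congX_add].
Qed.

Lemma congX_prod I (s : seq I) (P : pred I) (F G : I -> {poly int}) :
  (forall i, P i -> congX q n (F i) (G i)) ->
  congX q n (\prod_(i <- s | P i) F i) (\prod_(i <- s | P i) G i).
Proof.
by move=> h; apply: (big_ind2 (congX q n)) => //; [apply: congX_refl | apply: congX_mul].
Qed.

Lemma congX_1subXn m : (n < m)%N -> congX q n (1 - 'X^m) 1.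
Proof.
move=> nm i hi; rewrite addrAC subrr add0r coefN coefXn.
by rewrite ltn_eqF ?oppr0 ?dvdz0 // (leq_ltn_trans hi nm).
Qed.

End TruncatedCongruence.

Lemma congX_frobenius p n a b : prime p ->
  congX p%:Z n ((a - b) ^+ p) (a ^+ p - b ^+ p).
Proof.
move=> p_pr i _; have chFp := pchar_Fp p_pr.
have p_char : [char {poly 'F_p}].-nat p by rewrite pnatE // (pchar_poly _ p).
rewrite (dvdz_pcharf chFp) -(coef_map (intr : {rmorphism int -> 'F_p})).
by rewrite !(rmorphB, rmorphXn) exprDn_pchar // exprNn_pchar // subrr coef0.
Qed.

Lemma congX_lift p n j u v : prime p -> congX (p%:Z ^+ j.+1) n u v ->
  congX (p%:Z ^+ j.+2) n (u ^+ p) (v ^+ p).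
Proof.
move=> p_pr huv; apply/congX_sub0; rewrite subrXX exprSr.
apply: congX0_mul; first by move/congX_sub0: huv.
have {}huv : congX p%:Z n u v.
  by apply: congX_dvd huv; rewrite exprS dvdz_mulr.
apply: (@congX_trans _ _ _ (\sum_(i < p) v ^+ (p.-1 - i) * v ^+ i)).
  by apply: congX_sum => i _; apply/congX_mulr/congX_exp.
rewrite (eq_bigr (fun _ => v ^+ p.-1)) ?sumr_const ?card_ord; first exact: congX_muln0.
by move=> i _; rewrite -exprD subnK // -ltnS prednK ?prime_gt0.
Qed.

Lemma congX_lift_iter p n j u v : prime p -> congX p%:Z n u v ->
  congX (p%:Z ^+ j.+1) n (u ^+ (p ^ j)) (v ^+ (p ^ j)).
Proof.
move=> p_pr huv; elim: j => [|j ih]; first by rewrite !expr1.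
by rewrite expnSr !exprM; apply: congX_lift.
Qed.

Definition geom_truncZ (d n : nat) : {poly int} := \sum_(j < n.+1) 'X^(j * d).
Definition gfA (p n : nat) : {poly int} := \prod_(i < n.+1) geom_truncZ (p ^ i) n.
Definition gfA_inv (p n : nat) : {poly int} := \prod_(i < n.+1) (1 - 'X^(p ^ i)).

Lemma A_coef m k n : (A m k n)%:Z = (gfA m n ^+ k)`_n.
Proof.
rewrite /A /gfA -prodrXl -coef_map rmorph_prod.
rewrite (eq_bigr (fun i : 'I_n.+1 => geom_truncZ (m ^ i) n ^+ k)) // => i _.
rewrite rmorphXn rmorph_sum; congr (_ ^+ _).
by apply: eq_bigr => j _; apply: map_polyXn.
Qed.

Lemma geom_truncZ_mul_1subXn d n : geom_truncZ d n * (1 - 'X^d) = 1 - 'X^(n.+1 * d).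
Proof.
rewrite mulnC exprM -[RHS]opprB subrX1 -mulNr opprB mulrC /geom_truncZ.
by congr (_ * _); apply: eq_bigr => j _; rewrite -exprM mulnC.
Qed.

Lemma gfA_mul_inv q p n : (0 < p)%N -> congX q n (gfA p n * gfA_inv p n) 1.
Proof.
move=> p_gt0; rewrite -big_split /=.
rewrite -[X in congX _ _ _ X](@big1_eq _ 1 *%R _ (index_enum 'I_n.+1) xpredT).
apply: congX_prod => i _; rewrite geom_truncZ_mul_1subXn; apply: congX_1subXn.
have : (0 < p ^ i)%N by rewrite expn_gt0 p_gt0.
by rewrite mulSn; nia.
Qed.

Lemma gfA_inv_mul_1subXn p n :
  gfA_inv p n * (1 - 'X^(p ^ n.+1)) = (1 - 'X) * \prod_(i < n.+1) (1 - 'X^(p ^ i.+1)).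
Proof.
pose F (i : nat) : {poly int} := 1 - 'X^(p ^ i).
have -> : gfA_inv p n * F n.+1 = \prod_(i < n.+2) F i by rewrite big_ord_recr.
by rewrite big_ord_recl /F expn0 expr1.
Qed.

Lemma congX_gfA_inv p n : prime p ->
  congX p%:Z n (gfA_inv p n) ((1 - 'X) * gfA_inv p n ^+ p).
Proof.
move=> p_pr; have n_lt : (n < p ^ n.+1)%N.
  by apply: leq_trans (ltn_expl _ (prime_gt1 p_pr)); rewrite ltnS.
apply: (@congX_trans _ _ _ (gfA_inv p n * (1 - 'X^(p ^ n.+1)))).
  rewrite -{1}[gfA_inv p n]mulr1; apply: congX_mul; first exact: congX_refl.
  exact/congX_sym/congX_1subXn.
rewrite gfA_inv_mul_1subXn; apply/congX_mul; first exact: congX_refl.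
rewrite /gfA_inv -prodrXl; apply: congX_prod => i _.
apply: congX_sym; rewrite expnSr exprM -[X in congX _ _ _ (X - _)](expr1n _ p).
exact: congX_frobenius.
Qed.

Lemma congX_gfA_exp_pred p n : prime p -> congX p%:Z n (gfA p n ^+ p.-1) (1 - 'X).
Proof.
move=> p_pr; set F := gfA p n; set H := gfA_inv p n.
have FH : congX p%:Z n (F * H) 1 by apply/gfA_mul_inv/prime_gt0.
apply: (@congX_trans _ _ _ (F ^+ p.-1 * (F * H))).
  by rewrite -{1}[F ^+ _]mulr1; apply/congX_mul; [apply: congX_refl | apply: congX_sym].
rewrite mulrA -exprSr prednK ?prime_gt0 //.
apply: (@congX_trans _ _ _ (F ^+ p * ((1 - 'X) * H ^+ p))).
  by apply/congX_mul; [apply: congX_refl | apply: congX_gfA_inv].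
rewrite mulrCA -exprMn -[X in congX _ _ _ X]mulr1.
by apply/congX_mul; [apply: congX_refl | rewrite -(expr1n _ p); apply: congX_exp].
Qed.

Lemma congX_gfA_exp p n k : prime p -> (p.-1 %| k)%N ->
  congX (p%:Z ^+ logn p k) n (gfA p n ^+ k) ((1 - 'X) ^+ (k %/ p.-1)).
Proof.
move=> p_pr dvd_k; case e_def: (logn p k) => [|e].
  by move=> i _; rewrite expr0 dvd1z.
have k_gt0 : (0 < k)%N by move: e_def; case: (k) => //; rewrite logn0.
have pe_dvd : (p ^ e %| k)%N by rewrite pfactor_dvdn // e_def.
have cop : coprime p.-1 (p ^ e) by rewrite coprimeXr // coprimePn ?prime_gt0.
have /dvdnP[c ->] : (p.-1 * p ^ e %| k)%N by rewrite Gauss_dvd // dvd_k.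
have pred_gt0 : (0 < p.-1)%N by rewrite -ltnS prednK ?prime_gt0 ?prime_gt1.
rewrite mulnCA mulKn // [(c * _)%N]mulnC mulnA !exprM.
exact/congX_exp/congX_lift_iter/congX_gfA_exp_pred.
Qed.

Lemma congX_gfA_exp_sub q p n k r : (0 < p)%N -> (r <= k)%N ->
  congX q n (gfA p n ^+ (k - r)) (gfA p n ^+ k * gfA_inv p n ^+ r).
Proof.
move=> p_gt0 le_rk; rewrite -{2}(subnK le_rk) exprD -mulrA -exprMn.
rewrite -[X in congX _ _ X]mulr1; apply/congX_mul; first exact: congX_refl.
by apply: congX_sym; rewrite -(expr1n _ r); apply/congX_exp/gfA_mul_inv.
Qed.

Definition supported (a : {poly int}) (P : pred nat) := forall j, a`_j != 0 -> P j.

Lemma supported_mul a b (P Q R : pred nat) : supported a P -> supported b Q ->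
  (forall u v, P u -> Q v -> R (u + v)%N) -> supported (a * b) R.
Proof.
move=> ha hb hR j; apply: contraR => Rj; rewrite coefM big1 // => i _.
have [->|ai] := eqVneq a`_i 0; first by rewrite mul0r.
have [->|bi] := eqVneq b`_(j - i) 0; first by rewrite mulr0.
by have := hR _ _ (ha _ ai) (hb _ bi); rewrite subnKC ?(negbTE Rj) // -ltnS.
Qed.

Lemma supported1 (P : pred nat) : P 0%N -> supported 1 P.
Proof. by move=> P0 [|j]; rewrite coef1. Qed.

Lemma supported_prod (I : eqType) (s : seq I) (F : I -> {poly int}) (P : pred nat) :
  P 0%N -> (forall u v, P u -> P v -> P (u + v)%N) ->
  (forall i, i \in s -> supported (F i) P) -> supported (\prod_(i <- s) F i) P.
Proof.
move=> P0 PD hF; rewrite big_seq.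
apply: (big_ind (supported^~ P)) => [|a b ha hb|//]; first exact: supported1.
exact: supported_mul ha hb PD.
Qed.

Lemma supported_1subXn_exp r d :
  supported ((1 - 'X^d) ^+ r) (fun j => (d %| j) && (j <= r * d))%N.
Proof.
elim: r => [|r ih]; first by apply: supported1; rewrite dvdn0.
rewrite exprS; apply: (@supported_mul _ _ (fun j => (d %| j) && (j <= d))%N _ _ _ ih).
  move=> j; rewrite coefB coef1 coefXn.
  have [->|_] := eqVneq j d; first by rewrite dvdnn leqnn.
  by case: j => [|j]; rewrite ?dvdn0 ?subrr ?eqxx.
move=> u v /andP[du ud] /andP[dv vd]; rewrite dvdn_add //= mulSn.
exact: leq_add.
Qed.

Lemma supported_prod_1subXn_low p r L : (r < p)%N ->
  supported (\prod_(i < L) (1 - 'X^(p ^ i)) ^+ r) (fun j => j < p ^ L)%N.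
Proof.
move=> lt_rp; elim: L => [|L ih]; first by rewrite big_ord0; apply: supported1.
rewrite big_ord_recr /=; apply: (supported_mul ih (@supported_1subXn_exp r (p ^ L))).
by move=> u v lt_u /andP[_ le_v]; rewrite expnS; nia.
Qed.

Lemma supported_prod_1subXn_high p r L n :
  supported (\prod_(L <= i < n) (1 - 'X^(p ^ i)) ^+ r) (fun j => p ^ L %| j)%N.
Proof.
apply: supported_prod => [||i]; [exact: dvdn0 | exact: dvdn_add |].
rewrite mem_iota => /andP[le_Li _] j /supported_1subXn_exp /andP[dvd_j _].
by apply: dvdn_trans dvd_j; rewrite dvdn_exp2l.
Qed.

Lemma coef_gfA_inv_exp_gap p n r L m : (r.+2 <= p)%N -> (L <= n)%N ->
  (r.+1 * p ^ L <= m < r.+2 * p ^ L)%N -> (gfA_inv p n ^+ r)`_m = 0.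
Proof.
move=> le_rp le_Ln m_gap; set P := (p ^ L)%N.
rewrite /gfA_inv -prodrXl -(big_mkord xpredT (fun i => (1 - 'X^(p ^ i)) ^+ r)).
rewrite (@big_cat_nat _ _ _ L) ?(leq_trans le_Ln) //= big_mkord.
rewrite big_ltn ?ltnS //=.
(* Factors below L only reach degrees < P, the factor at L gives multiples of
   P up to rP, and those above L give multiples of pP >= (r+2)P. *)
pose off_mid j := ~~ (r * P < j < r.+2 * P)%N.
have mid : supported ((1 - 'X^P) ^+ r * \prod_(L.+1 <= i < n.+1) (1 - 'X^(p ^ i)) ^+ r)
    off_mid.
  apply: supported_mul (@supported_1subXn_exp r P)
    (@supported_prod_1subXn_high p r L.+1 n.+1) _.
  move=> u v /andP[/dvdnP[a ->] le_u] /dvdnP[s ->]; rewrite /off_mid /P expnS.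
  by case: s => [|s]; nia.
have supp : supported (\prod_(i < L) (1 - 'X^(p ^ i)) ^+ r *
    ((1 - 'X^P) ^+ r * \prod_(L.+1 <= i < n.+1) (1 - 'X^(p ^ i)) ^+ r))
    (fun j => ~~ (r.+1 * P <= j < r.+2 * P))%N.
  apply: supported_mul (@supported_prod_1subXn_low p r L (ltnW le_rp)) mid _.
  by move=> u v lt_u; rewrite /off_mid; nia.
by apply/eqP; apply: contraTT m_gap => /supp.
Qed.

Lemma coef_1subX_gfA_inv_exp p n r L K : (r.+2 <= p)%N -> (L <= n)%N ->
  (K < p ^ L)%N -> ((1 - 'X) ^+ K * gfA_inv p n ^+ r)`_(r.+2 * p ^ L).-1 = 0.
Proof.
move=> le_rp le_Ln lt_K; set m := (r.+2 * p ^ L).-1.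
have gap : supported (gfA_inv p n ^+ r)
    (fun j => ~~ (r.+1 * p ^ L <= j < r.+2 * p ^ L))%N.
  by move=> j; apply: contra_neqN; apply: coef_gfA_inv_exp_gap.
have low := @supported_1subXn_exp K 1; rewrite expr1 in low.
have supp := supported_mul low gap (R := fun j => j != m).
apply/eqP; apply: contraTT (eqxx m) => /supp; apply.
move=> u v /andP[_ le_u] off_v; rewrite /m; nia.
Qed.

Lemma nu_ge_dvdz p a e : prime p -> (p%:Z ^+ e %| a%:Z)%Z -> nu_ge p a e.
Proof.
rewrite dvdzE abszX /= => p_pr dvd_a.
have [->|a_gt0] := posnP a; [left | right] => //.
by rewrite -pfactor_dvdn.
Qed.

Local Close Scope ring_scope.

Theorem theorem3p2 (k p r : nat) :
  (0 < k)%N -> prime p -> (3 <= p)%N -> (p ^ 2 * (p - 1) %| k)%N ->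
  (1 <= r)%N -> (r <= p - 2)%N ->
  forall N : nat, exists n : nat, (N < n)%N /\ nu_ge p (A p (k - r) n) (logn p k).
Proof.
(* Only (p - 1) | k and r <= p - 2 are needed. *)
move=> k_gt0 p_pr _ dvd_k _ le_r N.
have p_gt0 := prime_gt0 p_pr.
have dvd_pred : p.-1 %| k by rewrite -subn1 (dvdn_trans _ dvd_k) ?dvdn_mull.
have le_rk : r <= k by have := dvdn_leq k_gt0 dvd_pred; lia.
set K := k %/ p.-1; set L := (K + N).+1.
have lt_L : L < p ^ L := ltn_expl L (prime_gt1 p_pr).
have [lt_KL lt_NL] : K < L /\ N < L by split; lia.
set n := (r.+2 * p ^ L).-1.
exists n; split; first by nia.
apply: nu_ge_dvdz => //; rewrite A_coef.
have := congX_trans (@congX_gfA_exp_sub _ p n k r p_gt0 le_rk)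
                    (congX_mulr (gfA_inv p n ^+ r) (@congX_gfA_exp p n k p_pr dvd_pred)).
move/(_ n (leqnn n)); rewrite coefB coef_1subX_gfA_inv_exp ?subr0 //; lia.
Qed.
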